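(* Let $R\subseteq\mathbb{N}$ be a random set obtained by including each $n\in\mathbb{N}$ in $R$ independently with probability $1/2$. Then $R$ is rich with probability $1$.
   Context: A set $R\subseteq\mathbb{N}$ is rich if for all $s,u,v\in\mathbb{N}$, all $\bar a_0\in\{0,1\}^s\setminus\{\bar0\}$, $\bar a_1,\dots,\bar a_u\in\mathbb{N}^s$ and all $c_1,\dots,c_u\in\mathbb{N}$ with $(\bar a_0,0)\ne(\bar a_i,c_i)$ for all $i\in\{1,\dots,u\}$, there exist $\bar x,\bar y\in(v+\mathbb{N})^s$ (vectors with all entries $\ge v$) such that $\bar a_0^\top\bar x\in R\iff\bar a_0^\top\bar y\notin R$, and $\bar a_i^\top\bar x-c_i\in R\iff\bar a_i^\top\bar y-c_i\in R$ for all $i\in\{1,\dots,u\}$. *)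

From HB Require Import structures.
From mathcomp Require Import all_boot all_order all_algebra.
From mathcomp Require Import all_classical all_reals all_analysis.
Set Implicit Arguments. Unset Strict Implicit. Unset Printing Implicit Defensive.
Import Order.TTheory GRing.Theory Num.Theory.
Local Open Scope classical_set_scope.

Definition dotn (s : nat) (a x : 'I_s -> nat) : nat := (\sum_(j < s) a j * x j)%N.

(* "d - c \in R" for natural d, c, where d - c is the integer difference:
   it is in R (a subset of N) iff it is nonnegative and belongs to R *)
Definition shift_in (R : set nat) (d c : nat) : Prop := (c <= d)%N /\ R (d - c)%N.

Definition rich (R : set nat) : Prop :=
  forall (s u v : nat) (a0 : 'I_s -> nat) (a : 'I_u -> 'I_s -> nat) (c : 'I_u -> nat),
    (forall j, (a0 j <= 1)%N) ->
    (exists j, a0 j <> 0%N) ->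
    (forall i, ~ ((forall j, a i j = a0 j) /\ c i = 0%N)) ->
    exists x y : 'I_s -> nat,
      (forall j, (v <= x j)%N) /\ (forall j, (v <= y j)%N) /\
      (R (dotn a0 x) <-> ~ R (dotn a0 y)) /\
      (forall i, shift_in R (dotn (a i) x) (c i) <-> shift_in R (dotn (a i) y) (c i)).

Definition mutually_independent_events d (T : measurableType d) (K : realType)
    (P : probability T K) (E : nat -> set T) : Prop :=
  forall I : seq nat, uniq I ->
    P (\bigcap_(i in [set` I]) E i) = (\prod_(i <- I) P (E i))%E.

From HB Require Import structures.
From mathcomp Require Import all_boot all_order all_algebra.
From mathcomp Require Import all_classical all_reals all_analysis.
From mathcomp Require Import zify ring lra.
Set Implicit Arguments. Unset Strict Implicit. Unset Printing Implicit Defensive.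
Import Order.TTheory GRing.Theory Num.Theory numFieldNormedType.Exports.
Local Open Scope classical_set_scope.
Local Open Scope ring_scope.

(* Encode coefficient vectors by base-B digits: for x_j = N B^j and
   y_j = N D B^j every linear form gives a.x = N code(a) and a.y = N D code(a),
   and distinct vectors with small entries have distinct codes.  Hence an
   instance is solved at scale N as soon as N code(a_0) lies in R while
   N D code(a_0) and all N code(a_i) - c_i, N D code(a_i) - c_i lie outside R;
   the hypothesis (a_0, 0) <> (a_i, c_i) makes this finite pattern consistent.
   For the scales N = H^(k+1), with H large, the patterns involve pairwise
   disjoint sets of integers, so they are independent events of probability
   at least 2^-m for a fixed m, and almost surely one of them occurs.  As
   there are countably many instances, almost surely all of them are solved. *)

Section DigitCode.
Local Open Scope nat_scope.

Definition digit_code (B : nat) {s : nat} (f : 'I_s -> nat) := \sum_(j < s) f j * B ^ j.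

Lemma digit_codeS B s (f : 'I_s.+1 -> nat) :
  digit_code B f = f ord0 + B * digit_code B (fun j => f (lift ord0 j)).
Proof.
rewrite /digit_code big_ord_recl expn0 muln1 big_distrr; congr (_ + _).
by apply: eq_bigr => j _; rewrite lift0 expnS mulnCA.
Qed.

Lemma digit_code_inj B s (f g : 'I_s -> nat) :
  (forall j, f j < B) -> (forall j, g j < B) -> digit_code B f = digit_code B g -> f =1 g.
Proof.
elim: s f g => [|s IH] f g ltfB ltgB; first by move=> _ [].
have B_gt0 : 0 < B by apply: leq_ltn_trans (ltfB ord0).
rewrite !digit_codeS => eq_code.
have eq0 : f ord0 = g ord0.
  have := congr1 (modn^~ B) eq_code.
  by rewrite ![(_ ord0 + _)]addnC ![(B * _)]mulnC !modnMDl !modn_small.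
move: eq_code; rewrite eq0 => /addnI /eqP; rewrite eqn_pmul2l // => /eqP eq_tail j.
case: (unliftP ord0 j) => [j'|] ->; last exact: eq0.
exact: (IH (fun j => f (lift ord0 j)) (fun j => g (lift ord0 j))).
Qed.

Lemma digit_code_gt0 B s (f : 'I_s -> nat) :
  0 < B -> (exists j, f j <> 0) -> 0 < digit_code B f.
Proof.
move=> B_gt0 [j /eqP fj_neq0]; rewrite /digit_code (bigD1 j) //=.
by rewrite ltn_addr // muln_gt0 lt0n fj_neq0 expn_gt0 B_gt0.
Qed.

Lemma dotn_geometric s (f : 'I_s -> nat) M B :
  dotn f (fun j => M * B ^ j) = M * digit_code B f.
Proof. by rewrite /dotn /digit_code big_distrr; apply: eq_bigr => j _; rewrite mulnCA. Qed.

End DigitCode.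

Section ScalePattern.
Local Open Scope nat_scope.
Variables (l : seq (nat * nat)) (e0 v : nat).

Definition shift_bound := \max_(ec <- l) ec.2.
Definition coef_bound := maxn e0 (\max_(ec <- l) ec.1).
Definition dilation := coef_bound + shift_bound + 1.
Definition scale_base := dilation * coef_bound + shift_bound + v + 1.

Definition active_coefs := [seq ec <- l | 0 < ec.1].

(* Subtraction is truncated, which is harmless: when [c > N * e],
   [shift_in R (N * e) c] fails anyway. *)
Definition negative_keys N :=
  [seq z <- undup ([seq N * ec.1 - ec.2 | ec <- active_coefs]
                   ++ [seq N * dilation * ec.1 - ec.2 | ec <- active_coefs]
                   ++ [:: N * dilation * e0]) | z != N * e0].

Definition scale_pattern N :=
  (N * e0, true) :: [seq (z, false) | z <- negative_keys N].

(* All keys of [scale_pattern N] lie in [N - shift_bound, N * dilation * coef_bound]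
   (see [scale_pattern_window]); the ratio [scale_base] between consecutive
   scales makes these windows pairwise disjoint. *)
Definition scaled_pattern k := scale_pattern (scale_base ^ k.+1).

Lemma scale_pattern_keys N : map fst (scale_pattern N) = N * e0 :: negative_keys N.
Proof. by rewrite /= -map_comp map_id. Qed.

Lemma uniq_scale_pattern N : uniq (map fst (scale_pattern N)).
Proof.
by rewrite scale_pattern_keys /= mem_filter eqxx filter_uniq ?undup_uniq.
Qed.

Lemma size_scale_pattern N : size (scale_pattern N) <= (2 * size l).+2.
Proof.
rewrite /= size_map size_filter ltnS; apply: leq_trans (count_size _ _) _.
apply: leq_trans (size_undup _) _; rewrite !size_cat !size_map /=.
have : size active_coefs <= size l by rewrite size_filter count_size.
lia.
Qed.

Lemma active_coef_bounds ec :
  ec \in active_coefs -> [/\ 0 < ec.1, ec.1 <= coef_bound & ec.2 <= shift_bound].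
Proof.
rewrite mem_filter => /andP[ec1_gt0 ec_l]; split => //.
  by rewrite leq_max (leq_bigmax_seq (F := fst) ec ec_l) ?orbT.
exact: leq_bigmax_seq ec ec_l isT.
Qed.

Lemma e0_le_coef_bound : e0 <= coef_bound.
Proof. exact: leq_maxl. Qed.

Hypothesis e0_gt0 : 0 < e0.

Lemma scale_pattern_window N z : 0 < N -> z \in map fst (scale_pattern N) ->
  N <= z + shift_bound /\ z <= N * (dilation * coef_bound).
Proof.
move=> N_gt0; have e0_le := e0_le_coef_bound.
have D_gt0 : 0 < dilation by rewrite /dilation addn1.
have le_DE : coef_bound <= dilation * coef_bound by rewrite leq_pmull.
suff window p c : 0 < p <= dilation * coef_bound -> c <= shift_bound ->
    N <= N * p - c + shift_bound /\ N * p - c <= N * (dilation * coef_bound).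
  rewrite scale_pattern_keys inE mem_filter mem_undup !mem_cat inE.
  move=> /predU1P[->|/andP[_]].
    by rewrite -[N * e0]subn0; apply: window; rewrite ?e0_gt0 ?(leq_trans e0_le).
  case/or3P=> [/mapP[ec /active_coef_bounds[ec1_gt0 ec1_le ec2_le] ->]|
               /mapP[ec /active_coef_bounds[ec1_gt0 ec1_le ec2_le] ->]|/eqP->].
  - by apply: window; rewrite ?ec1_gt0 ?(leq_trans ec1_le).
  - by rewrite -mulnA; apply: window; rewrite ?muln_gt0 ?D_gt0 ?ec1_gt0 ?leq_mul2l ?ec1_le ?orbT.
  - rewrite -mulnA -[N * _]subn0; apply: window => //.
    by rewrite muln_gt0 D_gt0 e0_gt0 leq_mul2l e0_le orbT.
move=> /andP[p_gt0 p_le] c_le; split; first nia.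
by apply: leq_trans (leq_subr _ _) _; rewrite leq_mul2l p_le orbT.
Qed.

Lemma scale_base_le_pow k : scale_base <= scale_base ^ k.+1.
Proof. by rewrite expnS leq_pmulr // expn_gt0 /scale_base addn1. Qed.

Lemma scaled_patterns_disjoint k k' : k < k' ->
  ~~ has (mem (map fst (scaled_pattern k))) (map fst (scaled_pattern k')).
Proof.
move=> lt_kk'; apply/hasPn => z z_k'; apply/negP => z_k.
have H_gt0 : 0 < scale_base by rewrite /scale_base addn1.
have N_gt0 k1 : 0 < scale_base ^ k1.+1 by rewrite expn_gt0 H_gt0.
have [_ z_le] := scale_pattern_window (N_gt0 k) z_k.
have [z_ge _] := scale_pattern_window (N_gt0 k') z_k'.
have : scale_base * scale_base ^ k.+1 <= scale_base ^ k'.+1.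
  by rewrite -expnS leq_pexp2l.
move: (scale_base ^ k.+1) (scale_base ^ k'.+1) (N_gt0 k) z_le z_ge => N N' /=.
rewrite /scale_base; nia.
Qed.

Lemma mem_negative_keys_x N e c : shift_bound < N -> (e, c) \in l -> 0 < e ->
  (e != e0) || (0 < c) -> N * e - c \in negative_keys N.
Proof.
move=> lt_CN ec_l e_gt0 ec_neq; rewrite mem_filter mem_undup !mem_cat.
have ec_act : (e, c) \in active_coefs by rewrite mem_filter e_gt0.
rewrite (map_f (fun ec => N * ec.1 - ec.2) ec_act) andbT.
have [_ _ /= c_le] := active_coef_bounds ec_act.
apply/eqP; have [e_eq|e_neq] := eqVneq e e0.
  by rewrite e_eq eqxx /= in ec_neq; rewrite e_eq; nia.
by case: (ltngtP e e0) e_neq => // e_cmp _; nia.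
Qed.

Lemma mem_negative_keys_y N e c : 0 < N -> (e, c) \in l -> 0 < e ->
  N * dilation * e - c \in negative_keys N.
Proof.
move=> N_gt0 ec_l e_gt0; rewrite mem_filter mem_undup !mem_cat.
have ec_act : (e, c) \in active_coefs by rewrite mem_filter e_gt0.
rewrite (map_f (fun ec => N * dilation * ec.1 - ec.2) ec_act) orbT andbT.
have [_ _ /= c_le] := active_coef_bounds ec_act.
have := e0_le_coef_bound; rewrite /dilation => e0_le; apply/eqP; nia.
Qed.

Lemma mem_negative_keys_y0 N : 0 < N -> N * dilation * e0 \in negative_keys N.
Proof.
move=> N_gt0; rewrite mem_filter mem_undup !mem_cat inE eqxx !orbT andbT.
have D_gt1 : 1 < dilation by rewrite /dilation addn1 ltnS addn_gt0 (leq_trans e0_gt0) ?leq_maxl.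
apply/eqP; nia.
Qed.

End ScalePattern.

Section Instance.
Local Open Scope nat_scope.
Variables (s u v : nat) (a0 : 'I_s -> nat) (a : 'I_u -> 'I_s -> nat) (c : 'I_u -> nat).

Definition instance_base := (maxn (\max_j a0 j) (\max_i \max_j a i j)).+1.

Definition instance_coefs :=
  [seq (digit_code instance_base (a i), c i) | i <- enum 'I_u].

Definition instance_lead := digit_code instance_base a0.

Lemma lt_instance_base0 j : a0 j < instance_base.
Proof. by rewrite ltnS leq_max leq_bigmax. Qed.

Lemma lt_instance_base i j : a i j < instance_base.
Proof.
rewrite ltnS leq_max orbC (leq_trans (leq_bigmax j)) //.
exact: leq_bigmax (fun i => \max_j a i j) i.
Qed.

Hypothesis a0_neq0 : exists j, a0 j <> 0.
Hypothesis a_neq_a0 : forall i, ~ ((forall j, a i j = a0 j) /\ c i = 0).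

Lemma instance_lead_gt0 : 0 < instance_lead.
Proof. exact: digit_code_gt0. Qed.

Lemma solve_instance (R : set nat) N :
  scale_base instance_coefs instance_lead v <= N ->
  R (N * instance_lead) ->
  (forall z, z \in negative_keys instance_coefs instance_lead N -> ~ R z) ->
  exists x y : 'I_s -> nat,
    (forall j, v <= x j) /\ (forall j, v <= y j) /\
    (R (dotn a0 x) <-> ~ R (dotn a0 y)) /\
    (forall i, shift_in R (dotn (a i) x) (c i) <-> shift_in R (dotn (a i) y) (c i)).
Proof.
set B := instance_base; set l := instance_coefs; set e0 := instance_lead.
set D := dilation l e0; rewrite /scale_base -/D => le_HN R_lead notR_neg.
have le_vN : v <= N by lia.
have lt_CN : shift_bound l < N by lia.
have N_gt0 : 0 < N by lia.
have B_gt0 : 0 < B by [].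
have D_gt0 : 0 < D by rewrite /D /dilation addn1.
exists (fun j => N * B ^ j), (fun j => N * D * B ^ j); rewrite !dotn_geometric.
split; first by move=> j; rewrite (leq_trans le_vN) // leq_pmulr ?expn_gt0 ?B_gt0.
split; first by move=> j; rewrite (leq_trans le_vN) // -mulnA leq_pmulr ?muln_gt0 ?expn_gt0 ?D_gt0 ?B_gt0.
have e0_gt0 : 0 < e0 := instance_lead_gt0.
split; first by split=> // _; apply/notR_neg/mem_negative_keys_y0.
move=> i; rewrite !dotn_geometric.
have [->|ei_gt0] := posnP (digit_code B (a i)); first by rewrite !muln0.
have ec_l : (digit_code B (a i), c i) \in l by apply: map_f; rewrite mem_enum.
suff [notRx notRy] : ~ R (N * digit_code B (a i) - c i) /\
                     ~ R (N * D * digit_code B (a i) - c i).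
  by split=> -[_]; [move/notRx | move/notRy].
split; apply: notR_neg; last exact: mem_negative_keys_y.
apply: mem_negative_keys_x => //; rewrite lt0n -negb_and.
apply/negP => /andP[/eqP eq_code /eqP ci0]; apply: (@a_neq_a0 i); split => //.
exact: digit_code_inj (lt_instance_base i) lt_instance_base0 eq_code.
Qed.

End Instance.

Lemma lb_expr_le0 (R : realType) (q y : R) :
  0 <= q < 1 -> (forall n, y <= q ^+ n) -> y <= 0.
Proof.
move=> /andP[q_ge0 q_lt1] y_le.
have q_cvg : (GRing.exp q : R ^nat) @ \oo --> 0 by apply: cvg_expr; rewrite ger0_norm.
have <- := cvg_lim _ q_cvg.
apply: limr_ge; first by apply/cvg_ex; exists 0.
by near=> n; exact: y_le.
Unshelve. all: by end_near.
Qed.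

Lemma probabilityD d (T : measurableType d) (R : realType) (P : probability T R)
    (A B : set T) :
  measurable A -> measurable B -> P (A `\` B) = (P A - P (A `&` B))%E.
Proof.
move=> mA mB; apply: measureD => //.
by apply: le_lt_trans (probability_le1 P mA) _; rewrite ltry.
Qed.

Lemma bigcap_seq_cons (I : choiceType) (U : Type) (F : I -> set U) i s :
  \bigcap_(j in [set` i :: s]) F j = F i `&` \bigcap_(j in [set` s]) F j.
Proof. by rewrite !bigcap_seq big_cons. Qed.

Section FairCoinPatterns.
Context d (T : measurableType d) (R : realType) (P : probability T R) (E : nat -> set T).

Fixpoint pattern_event (L : seq (nat * bool)) : set T :=
  if L is (n, b) :: L' then (if b then E n else ~` E n) `&` pattern_event L' else setT.

Lemma pattern_event_cat L1 L2 :
  pattern_event (L1 ++ L2) = pattern_event L1 `&` pattern_event L2.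
Proof. by elim: L1 => [|[n b] L1 IH] /=; rewrite ?setTI // IH setIA. Qed.

Lemma pattern_event_mem L w :
  pattern_event L w -> forall n b, (n, b) \in L -> (E n w <-> b).
Proof.
elim: L => [|[n' b'] L IH] //= [Ew Lw] n b.
rewrite inE => /predU1P[[-> ->]|nb_L]; last exact: IH nb_L.
by case: b' Ew => Ew; split=> // /Ew.
Qed.

Hypothesis mE : forall n, measurable (E n).
Hypothesis indE : mutually_independent_events P E.
Hypothesis hE : forall n, P (E n) = (1 / 2)%:E.

Lemma measurable_pattern_event L : measurable (pattern_event L).
Proof.
elim: L => [|[n b] L IH] /=; first exact: measurableT.
by apply: measurableI => //; case: b => //; exact: measurableC.
Qed.

Lemma measurable_bigcap_seq (I : seq nat) : measurable (\bigcap_(i in [set` I]) E i).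
Proof. exact: bigcap_measurableType. Qed.

Local Hint Resolve measurable_pattern_event measurable_bigcap_seq : core.

Lemma probability_bigcap_pattern_event (I : seq nat) L :
  uniq (I ++ map fst L) ->
  P (\bigcap_(i in [set` I]) E i `&` pattern_event L) = ((1 / 2) ^+ (size I + size L))%:E.
Proof.
elim: L I => [|[n b] L IH] I /=.
  rewrite cats0 setIT addn0 => /indE->.
  by elim: I => [|i I IHI]; rewrite ?big_nil // big_cons IHI hE -EFinM exprS.
rewrite cat_uniq /= negb_or => /and3P[uI /andP[nI IL] /andP[nL uL]].
have uIL : uniq (I ++ map fst L) by rewrite cat_uniq uI IL uL.
have unIL : uniq ((n :: I) ++ map fst L) by rewrite /= mem_cat negb_or nI nL.
rewrite addnS; case: b => /=.
  by rewrite setIA [_ `&` E n]setIC -bigcap_seq_cons IH.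
rewrite setICA setIC -setDE probabilityD //; last exact: measurableI.
rewrite IH // setIAC [_ `&` E n]setIC -bigcap_seq_cons IH //= -EFinB.
by congr (_%:E); rewrite addSn exprS; lra.
Qed.

Lemma probability_pattern_event L :
  uniq (map fst L) -> P (pattern_event L) = ((1 / 2) ^+ size L)%:E.
Proof.
have -> : pattern_event L = \bigcap_(i in [set` [::]]) E i `&` pattern_event L.
  by rewrite bigcap_seq big_nil setTI.
exact: (@probability_bigcap_pattern_event [::]).
Qed.

Section Avoidance.
Variable Ls : nat -> seq (nat * bool).
Hypothesis uniq_Ls : forall k, uniq (map fst (Ls k)).
Hypothesis disjoint_Ls :
  forall k k', (k < k')%N -> ~~ has (mem (map fst (Ls k))) (map fst (Ls k')).

Fixpoint avoid_patterns K :=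
  if K is K'.+1 then avoid_patterns K' `&` ~` pattern_event (Ls K') else setT.

Lemma measurable_avoid_patterns K : measurable (avoid_patterns K).
Proof.
elim: K => [|K IH] /=; first exact: measurableT.
exact: measurableI IH (measurableC _).
Qed.

Local Hint Resolve measurable_avoid_patterns : core.

Lemma probability_avoid_patterns K L : uniq (map fst L) ->
  (forall k, (k < K)%N -> ~~ has (mem (map fst L)) (map fst (Ls k))) ->
  P (pattern_event L `&` avoid_patterns K) =
    ((1 / 2) ^+ size L * \prod_(k < K) (1 - (1 / 2) ^+ size (Ls k)))%:E.
Proof.
elim: K L => [|K IH] L uL disj_L /=.
  by rewrite setIT probability_pattern_event // big_ord0 mulr1.
have disj_LK k : (k < K)%N -> ~~ has (mem (map fst L)) (map fst (Ls k)).
  by move=> lt_kK; apply: disj_L; rewrite ltnS ltnW.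
rewrite setIA -setDE probabilityD //; last exact: measurableI.
rewrite setIAC -pattern_event_cat !IH //; first last.
- move=> k lt_kK; rewrite map_cat has_sym has_cat negb_or has_sym disj_LK //=.
  exact: disjoint_Ls.
- by rewrite map_cat cat_uniq uL uniq_Ls disj_L.
rewrite -EFinB big_ord_recr /= size_cat exprD; congr (_%:E); ring.
Qed.

Lemma probability_avoid_patterns_le m K : (forall k, (size (Ls k) <= m)%N) ->
  (P (avoid_patterns K) <= ((1 - (1 / 2) ^+ m) ^+ K)%:E)%E.
Proof.
move=> size_Ls; have := @probability_avoid_patterns K [::] isT.
rewrite /= setTI expr0 mul1r => ->; last by move=> k _; apply/hasPn.
have -> : (1 - (1 / 2) ^+ m) ^+ K = \prod_(k < K) (1 - (1 / 2) ^+ m : R).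
  by rewrite prodr_const card_ord.
rewrite lee_fin; apply: ler_prod => k _.
have h_ge0 : 0 <= 1 / 2 :> R by lra.
have h_le1 : 1 / 2 <= 1 :> R by lra.
by rewrite subr_ge0 exprn_ile1 //= lerD2l lerN2 ler_wiXn2l.
Qed.

Lemma probability_avoid_all_patterns m : (forall k, (size (Ls k) <= m)%N) ->
  P (\bigcap_k ~` pattern_event (Ls k)) = 0%E.
Proof.
move=> size_Ls; set A := \bigcap_k _.
have mA : measurable A by apply: bigcapT_measurable => k; exact: measurableC.
have A_le K : (P A <= ((1 - (1 / 2) ^+ m) ^+ K)%:E)%E.
  apply: le_trans (probability_avoid_patterns_le K size_Ls).
  apply: le_measure; rewrite ?inE //.
  by elim: K => [|K IH] //= w Aw; split; [exact: IH | exact: Aw].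
have A_fin : P A \is a fin_num.
  by rewrite ge0_fin_numE // (le_lt_trans (A_le 0%N)) // ltry.
apply/eqP; rewrite eq_le measure_ge0 andbT -(fineK A_fin) lee_fin.
apply: (@lb_expr_le0 _ (1 - (1 / 2) ^+ m)) => [|K]; last by rewrite -lee_fin fineK.
have h_pos : 0 < (1 / 2 : R) ^+ m by apply: exprn_gt0; lra.
by rewrite subr_ge0 exprn_ile1 //= ?ltrBlDr ?ltrDl //; lra.
Qed.

Lemma ae_pattern_event m : (forall k, (size (Ls k) <= m)%N) ->
  {ae P, forall w, exists k, pattern_event (Ls k) w}.
Proof.
move=> size_Ls; exists (\bigcap_k ~` pattern_event (Ls k)); split.
- by apply: bigcapT_measurable => k; exact: measurableC.
- exact: probability_avoid_all_patterns size_Ls.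
- by move=> w /= none k _ Lkw; apply: none; exists k.
Qed.

End Avoidance.
End FairCoinPatterns.

Lemma scale_pattern_event_keys d (T : measurableType d) (E : nat -> set T)
    l e0 N w :
  pattern_event E (scale_pattern l e0 N) w ->
  E (N * e0) w /\ forall z, z \in negative_keys l e0 N -> ~ E z w.
Proof.
move=> Lw; split; first exact: (pattern_event_mem Lw (mem_head _ _)).2.
move=> z z_neg; have z_false : (z, false) \in scale_pattern l e0 N.
  by rewrite inE (map_f (fun z => (z, false)) z_neg) orbT.
by move/(pattern_event_mem Lw z_false).
Qed.

Lemma ae_forall_countable d (T : measurableType d) (R : realType)
    (mu : {measure set T -> \bar R}) (I : countType) (Q : I -> T -> Prop) :
  (forall i, {ae mu, forall w, Q i w}) -> {ae mu, forall w, forall i, Q i w}.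
Proof.
move=> aeQ.
have aeQn : {ae mu, forall w n, if unpickle n is Some i then Q i w else True}.
  by apply: ae_foralln => n; case: (unpickle n) => [i|]; [exact: aeQ | exact: aeW].
by apply: filterS aeQn => w Qw i; have := Qw (pickle i); rewrite pickleK.
Qed.

Lemma ae_scaled_pattern_event d (T : measurableType d) (R : realType)
    (P : probability T R) (E : nat -> set T) l e0 v :
  (forall n, measurable (E n)) -> mutually_independent_events P E ->
  (forall n, P (E n) = (1 / 2)%:E) -> (0 < e0)%N ->
  {ae P, forall w, exists k, pattern_event E (scaled_pattern l e0 v k) w}.
Proof.
move=> mE indE hE e0_gt0.
exact: (ae_pattern_event mE indE hE (Ls := scaled_pattern l e0 v)
  (fun k => uniq_scale_pattern l e0 _)
  (scaled_patterns_disjoint l v e0_gt0) (fun k => size_scale_pattern l e0 _)).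
Qed.

Theorem proposition6p7 (d : measure_display) (T : measurableType d) (K : realType)
    (P : probability T K) (E : nat -> set T) :
  (forall n, measurable (E n)) ->
  mutually_independent_events P E ->
  (forall n, P (E n) = (1 / 2)%:E) ->
  {ae P, forall w, rich [set n | E n w]}.
Proof.
move=> mE indE hE.
have all_met : {ae P, forall w, forall δ : seq (nat * nat) * nat * nat, (0 < δ.1.2)%N ->
    exists k, pattern_event E (scaled_pattern δ.1.1 δ.1.2 δ.2 k) w}.
  apply: ae_forall_countable => -[[l e0] v] /=.
  have [->|e0_gt0] := posnP e0; first exact: aeW.
  by apply: filterS (ae_scaled_pattern_event l v mE indE hE e0_gt0) => w ? _.
apply: filterS all_met => w met s u v a0 a c _ a0_neq0 a_neq_a0.
have [k /scale_pattern_event_keys[E_lead notE_neg]] :=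
  met (instance_coefs a0 a c, instance_lead a0 a, v) (instance_lead_gt0 a a0_neq0).
by apply: (solve_instance a0_neq0 a_neq_a0 (scale_base_le_pow _ _ _ k)).
Qed.
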